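(* The set $\mathcal A_1$ with the operation $\circ$ is a non-Abelian semigroup. That is: (i) if $\mathbf a,\mathbf b\in\mathcal A_1$, then $\mathbf a\circ\mathbf b\in\mathcal A_1$; (ii) for all $\mathbf a,\mathbf b,\mathbf c\in\mathcal A_1$, $(\mathbf a\circ\mathbf b)\circ\mathbf c=\mathbf a\circ(\mathbf b\circ\mathbf c)$; and the operation is not commutative.
   Context: Binary words are ordered lexicographically, with $\mathbf c\prec\mathbf d$ iff $\mathbf c0^\infty\prec\mathbf d0^\infty$. Word operations. For a binary word $c_1\dots c_k$: - if $c_k=0$, then $c_1\dots c_k^+=c_1\dots c_{k-1}1$; - the reflection is $\overline{c_1\dots c_k}=(1-c_1)\dots(1-c_k)$. Fundamental words. A binary word $a_1\dots a_m$ with $m\ge2$ is fundamental if $\overline{a_1\dots a_{m-i}}\preceq a_{i+1}\dots a_m\prec a_1\dots a_{m-i}$ for all $1\le i<m$. $\mathcal A_1$ is the set of such words; they all begin with $1$. The graph. For $\mathbf a\in\mathcal A_1$, let $G$ have vertices Start, $A$, $B$ and edges - $e_0$: Start$\to A$, - $e_1$: $A\to B$, - $e_2$: $B\to B$, - $e_3$: $B\to A$, - $e_4$: $A\to A$. It carries two labelings: - $\mathcal L_{\mathbf a}$: $e_0,e_3\mapsto\mathbf a^+$; $e_1\mapsto\overline{\mathbf a^+}$; $e_2\mapsto\mathbf a$; $e_4\mapsto\overline{\mathbf a}$; - $\mathcal L^*$: $e_0,e_3,e_4\mapsto1$; $e_1,e_2\mapsto0$. The map $\Phi_{\mathbf a}$.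 For a path $e_{i_1}\dots e_{i_k}$ with $i_1=0$, set $\Phi_{\mathbf a}(\mathcal L_{\mathbf a}(e_{i_1})\cdots\mathcal L_{\mathbf a}(e_{i_k}))=\mathcal L^*(e_{i_1}\dots e_{i_k})$. This is a bijection from such block words onto binary words beginning with $1$. Composition. $\mathbf a\circ\mathbf b:=\Phi_{\mathbf a}^{-1}(\mathbf b)$, a word of length $|\mathbf a||\mathbf b|$. For example, $10\circ110=110100$ while $110\circ10=111000$. *)

From mathcomp Require Import all_boot.
Set Implicit Arguments. Unset Strict Implicit. Unset Printing Implicit Defensive.

(* Binary words: seq bool, with true = 1 and false = 0. *)
Definition word := seq bool.

Definition pad (n : nat) (c : word) : word := c ++ nseq (n - size c) false.

Fixpoint lexlt_eq (c d : word) : bool :=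
  match c, d with
  | x :: c', y :: d' => (~~ x && y) || ((x == y) && lexlt_eq c' d')
  | _, _ => false
  end.

(* c < d  iff  c0^oo < d0^oo  (compare after padding to common length). *)
Definition wlt (c d : word) : bool :=
  let n := maxn (size c) (size d) in lexlt_eq (pad n c) (pad n d).
Definition wle (c d : word) : bool :=
  let n := maxn (size c) (size d) in (pad n c == pad n d) || wlt c d.

(* c^+ : if c ends with 0, replace that last 0 by 1 (otherwise unchanged;
   only used on words ending with 0). *)
Definition wplus (c : word) : word :=
  match rev c with
  | false :: r => rev (true :: r)
  | _ => c
  end.

Definition wrefl (c : word) : word := map negb c.

(* Fundamental words, the set A_1. *)
Definition fundamental (a : word) : bool :=
  (2 <= size a) &&
  all (fun i => wle (wrefl (take (size a - i) a)) (drop i a) &&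
                 wlt (drop i a) (take (size a - i) a))
      (iota 1 (size a).-1).

Inductive vertex := VStart | VA | VB.
Inductive edge := e0 | e1 | e2 | e3 | e4.

Definition esrc (e : edge) : vertex :=
  match e with e0 => VStart | e1 => VA | e2 => VB | e3 => VB | e4 => VA end.
Definition etgt (e : edge) : vertex :=
  match e with e0 => VA | e1 => VB | e2 => VB | e3 => VA | e4 => VA end.

Definition vertex_eqb (u v : vertex) : bool :=
  match u, v with
  | VStart, VStart | VA, VA | VB, VB => true
  | _, _ => false
  end.

Fixpoint chain (v : vertex) (p : seq edge) : bool :=
  match p with
  | [::] => true
  | e :: p' => vertex_eqb (esrc e) v && chain (etgt e) p'
  end.
Definition is_path0 (p : seq edge) : bool :=
  match p with
  | e0 :: p' => chain VA p'
  | _ => false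
  end.

Definition La (a : word) (e : edge) : word :=
  match e with
  | e0 | e3 => wplus a
  | e1 => wrefl (wplus a)
  | e2 => a
  | e4 => wrefl a
  end.
Definition Lstar (e : edge) : bool :=
  match e with e0 | e3 | e4 => true | e1 | e2 => false end.

Definition La_path (a : word) (p : seq edge) : word := flatten (map (La a) p).
Definition Lstar_path (p : seq edge) : word := map Lstar p.

(* Inverse of L^* on paths starting with e0: from each vertex A, B the
   outgoing edges have distinct L^*-labels, so the path is determined. *)
Fixpoint path_from (v : vertex) (b : word) : seq edge :=
  match b with
  | [::] => [::]
  | x :: b' =>
      match v, x with
      | VA, true => e4 :: path_from VA b'
      | VA, false => e1 :: path_from VB b'
      | VB, false => e2 :: path_from VB b'
      | _, _ => e3 :: path_from VA b'
      end
  end.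
Definition path_of (b : word) : seq edge :=
  match b with
  | [::] => [::]
  | _ :: b' => e0 :: path_from VA b'
  end.

(* Phi_a^{-1}(b) = L_a(path) where path is the unique path from Start with
   L^*(path) = b; composition a o b := Phi_a^{-1}(b). *)
Definition wcomp (a b : word) : word := La_path a (path_of b).

From mathcomp Require Import all_boot zify.
Set Implicit Arguments. Unset Strict Implicit. Unset Printing Implicit Defensive.

(* Write a fundamental word as a = a'0 (it also starts with 1). Reading the
   labelling L_a along the path of b shows that a o b = expand a' 0 b: every
   letter x of b becomes the block (a' xor p) x, where p is the letter before x
   (0 for the first one).  Associativity is then an identity between nested
   substitutions.  For closure, compare a suffix of a o b with the prefix of
   the same length.  If the suffix starts at a block boundary, the comparison
   is the one of the corresponding suffix and prefix of b, because blocks with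
   different flips are separated by their first letter (a' starts with 1).
   If it starts j letters inside a block, it is decided within the first two
   blocks, by the fundamental inequalities of a at the shifts j and |a| - j. *)

Lemma drop_catl (T : Type) n (s1 s2 : seq T) :
  n <= size s1 -> drop n (s1 ++ s2) = drop n s1 ++ s2.
Proof.
rewrite drop_cat leq_eqVlt => /predU1P[->|-> //].
by rewrite ltnn subnn drop0 drop_size.
Qed.

Lemma take_catr (T : Type) n (s1 s2 : seq T) :
  size s1 <= n -> take n (s1 ++ s2) = s1 ++ take (n - size s1) s2.
Proof. by rewrite take_cat ltnNge => ->. Qed.

Definition lexle (c d : word) : bool := (c == d) || lexlt_eq c d.

Lemma wreflK : involutive wrefl.
Proof. by move=> w; rewrite /wrefl -map_comp map_id_in // => x _ /=; rewrite negbK. Qed.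

Lemma wrefl_inj : injective wrefl.
Proof. exact: can_inj wreflK. Qed.

Lemma map_xorbN p (w : word) : map (xorb (~~ p)) w = wrefl (map (xorb p) w).
Proof. by rewrite /wrefl -map_comp; apply: eq_map => x /=; case: p; case: x. Qed.

Lemma map_xorb0 (w : word) : map (xorb false) w = w.
Proof. exact: map_id. Qed.

Lemma map_xorb1 (w : word) : map (xorb true) w = wrefl w.
Proof. by []. Qed.

Lemma wrefl_cat u v : wrefl (u ++ v) = wrefl u ++ wrefl v.
Proof. exact: map_cat. Qed.

Lemma wrefl_rcons u x : wrefl (rcons u x) = rcons (wrefl u) (~~ x).
Proof. exact: map_rcons. Qed.

Lemma lexlt_irr u : lexlt_eq u u = false.
Proof. by elim: u => [|x u IH] //=; rewrite IH eqxx; case: x. Qed.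

Lemma lexlt_cat u v u' v' : size u = size v ->
  lexlt_eq (u ++ u') (v ++ v') = lexlt_eq u v || (u == v) && lexlt_eq u' v'.
Proof.
elim: u v => [|x u IH] [|y v] //= [] /IH ->.
by case: x; case: y => //=; rewrite ?andbF ?orbF.
Qed.

Lemma lexlt_catl u v u' v' : size u = size v ->
  lexlt_eq u v -> lexlt_eq (u ++ u') (v ++ v').
Proof. by move=> suv ltuv; rewrite lexlt_cat // ltuv. Qed.

Lemma lexlt_trans : transitive lexlt_eq.
Proof.
move=> v u w; elim: u v w => [|x u IH] [|y v] [|z w] //=.
by case: x; case: y; case: z => //=; eauto.
Qed.

Lemma lexltW u v : lexlt_eq u v -> lexle u v.
Proof. by rewrite /lexle => ->; rewrite orbT. Qed.

Lemma lexle_lt_trans u v w : lexle u v -> lexlt_eq v w -> lexlt_eq u w.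
Proof. by case/orP => [/eqP->//|]; apply: lexlt_trans. Qed.

Lemma lexlt_le_trans u v w : lexlt_eq u v -> lexle v w -> lexlt_eq u w.
Proof. by move=> ltuv; case/orP => [/eqP<-//|]; apply: lexlt_trans. Qed.

Lemma lexlt_wrefl u v : lexlt_eq (wrefl u) (wrefl v) = lexlt_eq v u.
Proof. by elim: u v => [|x u IH] [|y v] //=; rewrite IH; case: x; case: y. Qed.

Lemma lexle_wrefl u v : lexle (wrefl u) (wrefl v) = lexle v u.
Proof. by rewrite /lexle lexlt_wrefl (inj_eq wrefl_inj) eq_sym. Qed.

Lemma lexlt_rcons01 s : lexlt_eq (rcons s false) (rcons s true).
Proof. by rewrite -!cats1 lexlt_cat // lexlt_irr eqxx. Qed.

Lemma lexle_rcons1 x y : size (rcons x true) = size y ->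
  lexlt_eq (rcons x false) y -> lexle (rcons x true) y.
Proof.
case/lastP: y => [|y e]; rewrite !size_rcons // => -[sxy].
rewrite /lexle -!cats1 !lexlt_cat //.
by case/orP => [->|/andP[/eqP-> ]]; [rewrite orbT | case: e => //; rewrite eqxx].
Qed.

Lemma lexlt_rcons_cat x (u : bool) y x2 y2 : size (rcons x u) = size y ->
  lexlt_eq (rcons x false) y -> (u -> lexlt_eq x2 y2) ->
  lexlt_eq (rcons x u ++ x2) (y ++ y2).
Proof.
move=> sxy lt0 lt2; rewrite lexlt_cat //.
case: u sxy lt2 => sxy lt2; last by rewrite lt0.
by case/orP: (lexle_rcons1 sxy lt0) => [->|->]; rewrite ?lt2 ?orbT.
Qed.

Fixpoint expand (a' : word) (p : bool) (c : word) : word :=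
  if c is x :: c' then map (xorb p) a' ++ x :: expand a' x c' else [::].

Lemma La_path_from a' p c :
  La_path (rcons a' false) (path_from (if p then VA else VB) c) = expand a' p c.
Proof.
have plus1 : wplus (rcons a' false) = rcons a' true.
  by rewrite /wplus rev_rcons rev_cons revK.
elim: c p => [|x c IH] [] //=; rewrite /La_path /= in IH *.
all: by case: x; rewrite /= ?(IH true) ?(IH false) ?plus1 /wrefl ?map_rcons
                 -?cats1 -?catA ?map_xorb0.
Qed.

Lemma wcomp_expand a' c :
  wcomp (rcons a' false) (true :: c) = expand a' false (true :: c).
Proof.
have plus1 : wplus (rcons a' false) = rcons a' true.
  by rewrite /wplus rev_rcons rev_cons revK.
rewrite /wcomp /La_path /= -/(La_path _ _) (La_path_from a' true) plus1.
by rewrite map_xorb0 -cats1 -catA.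
Qed.

Lemma size_expand a' p c : size (expand a' p c) = size c * (size a').+1.
Proof. by elim: c p => //= x c IH p; rewrite size_cat /= IH size_map mulSn addSnnS. Qed.

Lemma expand_cat a' p c d :
  expand a' p (c ++ d) = expand a' p c ++ expand a' (last p c) d.
Proof. by elim: c p => //= x c IH p; rewrite IH -catA. Qed.

Lemma expand_rcons a' p c x :
  expand a' p (rcons c x) = expand a' p c ++ rcons (map (xorb (last p c)) a') x.
Proof. by rewrite -cats1 expand_cat /= cats1. Qed.

Lemma expand_xorb a' q p c :
  expand a' (xorb q p) (map (xorb q) c) = map (xorb q) (expand a' p c).
Proof.
elim: c p => //= x c IH p; rewrite IH map_cat /= -map_comp.
by congr (_ ++ _); apply: eq_map => y /=; case: (q); case: (p); case: y.
Qed.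

Lemma expand_wrefl a' p c : wrefl (expand a' p c) = expand a' (~~ p) (wrefl c).
Proof. exact: (esym (expand_xorb a' true p c)). Qed.

Lemma expand_assoc a' b' q c :
  expand a' q (expand b' q c) =
  expand (expand a' false b' ++ map (xorb (last false b')) a') q c.
Proof.
elim: c q => //= x c IH q.
rewrite expand_cat /= -IH map_cat -catA -map_comp.
have -> : expand a' q (map (xorb q) b') = map (xorb q) (expand a' false b').
  by rewrite -expand_xorb; case: q.
have -> : last q (map (xorb q) b') = xorb q (last false b').
  by rewrite -(last_map (xorb q) b' false); case: q.
congr (_ ++ _ ++ _); apply: eq_map => y /=.
by case: q; case: (last false b'); case: y.
Qed.

Lemma take_expand a' p c q :
  take (q * (size a').+1) (expand a' p c) = expand a' p (take q c).
Proof.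
elim: c p q => [|x c IH] p [|q] //=; first by rewrite take0.
rewrite mulSn -cat_rcons take_cat size_rcons size_map ltnNge leq_addr /=.
by rewrite addKn IH cat_rcons.
Qed.

Lemma drop_expand a' p c q :
  drop (q * (size a').+1) (expand a' p c) = expand a' (last p (take q c)) (drop q c).
Proof.
elim: c p q => [|x c IH] p [|q] //=; first by rewrite drop0.
rewrite mulSn -cat_rcons drop_cat size_rcons size_map ltnNge leq_addr /=.
by rewrite addKn IH.
Qed.

Lemma lexlt_expand a' p u v : lexlt_eq (expand a' p u) (expand a' p v) = lexlt_eq u v.
Proof.
elim: u v p => [|x u IH] [|y v] p //=.
- by elim: (map _ a') => //= z w ->; rewrite eqxx andbT; case: z.
- by rewrite lexlt_cat //= lexlt_irr eqxx /=; case: x; case: y => //=; rewrite IH.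
Qed.

Lemma lexle_expand a' p u v : lexle u v -> lexle (expand a' p u) (expand a' p v).
Proof. by case/orP=> [/eqP-> | ltuv]; rewrite /lexle ?eqxx // lexlt_expand ltuv orbT. Qed.

Lemma lexlt_expand_flip a' u v : head false a' -> u != [::] -> v != [::] ->
  lexlt_eq (expand a' true u) (expand a' false v).
Proof. by case: a' => // x a' /= ->; case: u => // x' u; case: v. Qed.

Definition prefix_bounded (a x : word) : bool :=
  lexlt_eq x (take (size x) a) && lexle (wrefl (take (size x) a)) x.

Lemma pad_size c : pad (size c) c = c.
Proof. by rewrite /pad subnn cats0. Qed.

Lemma wlt_lexlt c d : size c = size d -> wlt c d = lexlt_eq c d.
Proof. by move=> scd; rewrite /wlt scd maxnn -{1}scd !pad_size. Qed.

Lemma wle_lexle c d : size c = size d -> wle c d = lexle c d.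
Proof.
by move=> scd; rewrite /wle -/(wlt c d) wlt_lexlt // scd maxnn -{1}scd !pad_size.
Qed.

Lemma fundamentalP a :
  reflect (2 <= size a /\ forall i, 0 < i < size a -> prefix_bounded a (drop i a))
          (fundamental a).
Proof.
have sizes i : 0 < i < size a ->
    size (wrefl (take (size a - i) a)) = size (drop i a) /\
    size (drop i a) = size (take (size a - i) a).
  by move=> lt_i; rewrite size_map size_drop size_takel ?leq_subr.
apply: (iffP andP) => -[-> bounded]; split=> //.
  move=> i lt_i; move/allP/(_ i): bounded; case: (sizes i lt_i) => s1 s2.
  rewrite mem_iota wle_lexle // wlt_lexlt // /prefix_bounded size_drop => ok_i.
  by rewrite andbC ok_i //; lia.
apply/allP => i; rewrite mem_iota => lt_i; have {}lt_i : 0 < i < size a by lia.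
case: (sizes i lt_i) => s1 s2.
by rewrite wle_lexle // wlt_lexlt // andbC -size_drop; apply: bounded.
Qed.

Lemma fundamental_shape a : fundamental a -> exists t, a = true :: rcons t false.
Proof.
case/fundamentalP; case/lastP: a => [|a' l] //; rewrite size_rcons => s2 bounded.
have := bounded (size a'); rewrite drop_rcons // drop_size /prefix_bounded /=.
case: a' s2 bounded => [|x t] //= _ _ /(_ (leqnn _)).
by case: l; case: x => //= _; exists t.
Qed.

Lemma prefix_bounded_expand_block a' B v p : head false a' -> v != [::] ->
  prefix_bounded B v -> prefix_bounded (expand a' false B) (expand a' p v).
Proof.
move=> a'1 v0 /andP[ltvB leBv].
rewrite /prefix_bounded size_expand take_expand.
set T := take (size v) B in ltvB leBv *.
have T0 : T != [::] by case: (T) ltvB; case: (v).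
rewrite expand_wrefl /=; case: p.
  by rewrite lexlt_expand_flip // lexle_expand.
rewrite lexlt_expand ltvB lexltW // lexlt_expand_flip //.
by case: (T) T0.
Qed.

Section InnerShift.

Variable a' : word.
Hypothesis fund_a : fundamental (rcons a' false).

Lemma fundamental_rcons0_shift i : 0 < i <= size a' ->
  lexlt_eq (rcons (drop i a') false) (take (size a' - i).+1 a') &&
  lexle (wrefl (take (size a' - i).+1 a')) (rcons (drop i a') false).
Proof.
move=> lt_i; have [_ /(_ i)] := fundamentalP _ fund_a.
rewrite size_rcons drop_rcons ?(andP lt_i).2 // /prefix_bounded size_rcons size_drop.
have -> : take (size a' - i).+1 (rcons a' false) = take (size a' - i).+1 a'.
  by rewrite -cats1 takel_cat //; lia.
by apply; lia.
Qed.

Lemma lexlt_flip_shift j p : 0 < j <= size a' ->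
  lexlt_eq (rcons (map (xorb p) (drop j a')) false) (take (size a' - j).+1 a').
Proof.
move=> lt_j; case/andP: (fundamental_rcons0_shift lt_j) => lt_sy le_ys.
case: p; last by rewrite map_xorb0.
apply: lexlt_le_trans (lexlt_rcons01 _) _.
rewrite map_xorb1 -[true]/(~~ false) -wrefl_rcons.
by rewrite -[take _ a']wreflK lexle_wrefl.
Qed.

Lemma lexlt_wrefl_coshift j : 0 < j <= size a' ->
  lexlt_eq (wrefl (take j a')) (rcons (drop (size a' - j).+1 a') true).
Proof.
move=> lt_j; have lt_i : 0 < (size a' - j).+1 <= size a' by lia.
case/andP: (fundamental_rcons0_shift lt_i) => _.
have -> : (size a' - (size a' - j).+1).+1 = j by lia.
by move/lexle_lt_trans; apply; apply: lexlt_rcons01.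
Qed.

Lemma prefix_bounded_expand_inner j p u D B : 0 < j <= size a' -> last u D = false ->
  prefix_bounded (expand a' false (true :: B))
                 (map (xorb p) (drop j a') ++ u :: expand a' u D).
Proof.
move=> lt_j lastD; set s := drop j a'; set T := take j a'.
set y := take (size a' - j).+1 a'; set s' := drop (size a' - j).+1 a'.
have size_y q v : size (rcons (map (xorb q) s) v) = size y.
  by rewrite size_rcons size_map size_drop size_takel //; lia.
have size_T : size (map (xorb true) T) = size (rcons s' true).
  by rewrite size_map size_rcons size_drop size_takel //; lia.
(* The head block is at most y, strictly when v = 0; for v = 1 the next block
   [wrefl T] is already smaller than [rcons s' true]. *)
have lt_two_blocks q v R1 R2 :
    lexlt_eq (rcons (map (xorb q) s) v ++ map (xorb v) T ++ R1)
             (y ++ rcons s' true ++ R2).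
  apply: lexlt_rcons_cat (size_y q v) (lexlt_flip_shift q lt_j) _ => v1.
  by rewrite v1 lexlt_catl //; apply: lexlt_wrefl_coshift.
have -> : expand a' false (true :: B) = y ++ rcons s' true ++ expand a' true B.
  by rewrite /= map_xorb0 -{1}(cat_take_drop (size a' - j).+1 a') -catA cat_rcons.
rewrite /prefix_bounded; case: D lastD => [/= u0 | u2 W _].
  rewrite u0 cats1 take_size_cat ?size_y //; apply/andP; split.
    exact: lexlt_flip_shift.
  rewrite -[rcons _ false]wreflK lexle_wrefl wrefl_rcons -map_xorbN.
  exact: lexle_rcons1 (size_y _ _) (lexlt_flip_shift _ lt_j).
set X := _ ++ _; have -> : X = rcons (map (xorb p) s) u ++ map (xorb u) T ++
                               (map (xorb u) s ++ u2 :: expand a' u2 W).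
  by rewrite /X /= -{1}(cat_take_drop j a') map_cat -!catA cat_rcons.
set R1 := _ ++ _ :: _; set R2 := expand a' true B.
rewrite (catA y) take_catr -?catA; last first.
  by rewrite !size_cat -(size_y p u) -size_T !size_map addnA leq_addr.
rewrite lt_two_blocks lexltW //.
(* Reflecting the suffix negates both flips and yields the same comparison. *)
rewrite -[rcons _ u ++ _]wreflK lexlt_wrefl !wrefl_cat wrefl_rcons -!map_xorbN.
exact: lt_two_blocks.
Qed.

End InnerShift.

Lemma fundamental_wcomp a b : fundamental a -> fundamental b -> fundamental (wcomp a b).
Proof.
move=> fund_a fund_b; have [a' [Ea a'1]] : exists a', a = rcons a' false /\ head false a'.
  by have [ta ->] := fundamental_shape fund_a; exists (true :: ta).
have [tb Eb] := fundamental_shape fund_b.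
case/fundamentalP: fund_b => size_b bounded_b.
rewrite Ea in fund_a; rewrite Ea Eb wcomp_expand -Eb.
apply/fundamentalP; split=> [|i /andP[i_gt0 lt_i]].
  by rewrite size_expand; apply: leq_trans size_b (leq_pmulr _ _).
rewrite size_expand in lt_i.
rewrite (divn_eq i (size a').+1) addnC -drop_drop drop_expand.
set q := i %/ _; set j := i %% _.
have lt_q : q < size b by rewrite ltn_divLR.
case Eq: (drop q b) => [|u D].
  by move/eqP: Eq; rewrite -size_eq0 size_drop subn_eq0 leqNgt lt_q.
have [j0 | j_gt0] := posnP j.
  rewrite j0 drop0 -Eq; apply: prefix_bounded_expand_block => //; first by rewrite Eq.
  apply: bounded_b; rewrite lt_q andbT lt0n; apply: contraTneq i_gt0 => q0.
  by rewrite (divn_eq i (size a').+1) -/q -/j q0 j0.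
have le_j : j <= size a' by rewrite -ltnS ltn_mod.
rewrite /= drop_catl ?size_map // -map_drop Eb.
apply: (prefix_bounded_expand_inner fund_a); rewrite ?j_gt0 //.
have := congr1 (last true) (cat_take_drop q b).
by rewrite last_cat Eq /= => ->; rewrite Eb /= last_rcons.
Qed.

Lemma wcomp_assoc a' b' c :
  wcomp (wcomp (rcons a' false) (true :: rcons b' false)) (true :: c) =
  wcomp (rcons a' false) (wcomp (true :: rcons b' false) (true :: c)).
Proof.
have -> : wcomp (rcons a' false) (true :: rcons b' false) =
          rcons (expand a' false (true :: b') ++ map (xorb (last true b')) a') false.
  by rewrite wcomp_expand -rcons_cons expand_rcons rcons_cat.
(* The second [wcomp_expand] applies because [expand (true :: b') _ _]
   reduces to a word starting with [true]. *)
rewrite -[true :: rcons b' false]rcons_cons !wcomp_expand.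
exact: esym (expand_assoc a' (true :: b') false (true :: c)).
Qed.

Theorem proposition2p11 :
  (forall a b : word, fundamental a -> fundamental b -> fundamental (wcomp a b)) /\
  (forall a b c : word, fundamental a -> fundamental b -> fundamental c ->
     wcomp (wcomp a b) c = wcomp a (wcomp b c)) /\
  (exists a b : word, fundamental a /\ fundamental b /\ wcomp a b <> wcomp b a).
Proof.
split; first exact: fundamental_wcomp.
split; last by exists [:: true; false], [:: true; true; false].
move=> a b c /fundamental_shape[ta ->] /fundamental_shape[tb ->].
move=> /fundamental_shape[tc ->].
by rewrite -rcons_cons wcomp_assoc.
Qed.
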